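(* Let $m,n\ge1$ be integers, $A=(a_{ij})$ an $n\times m$ real matrix and $q_{\max}>1$. The ILLL-algorithm on input $A,q_{\max}$ finds a sequence of $m$-tuples of integers $q_1,\dots,q_m$ such that for every real $Q$ with $2^{\frac{(m+n+3)(m+n)}{4m}}\le Q\le q_{\max}$ one of these $m$-tuples satisfies $$\max_j|q_j|\le Q\quad\text{and}\quad \max_i\|q_1a_{i1}+\dots+q_ma_{im}\|\le 2^{\frac{(m+n+3)(m+n)}{4n}}Q^{-\frac{m}{n}}.$$
   Context: $\|x\|$ denotes the distance from $x\in\mathbb R$ to the nearest integer. A basis $b_1,\dots,b_r$ of $\mathbb R^r$ with Gram–Schmidt vectors $b_i^*=b_i-\sum_{j<i}\mu_{ij}b_j^*$, $\mu_{ij}=(b_i,b_j^* )/(b_j^*,b_j^* )$, is reduced if $|\mu_{ij}|\le\frac12$ ($j<i$) and $|b_i^*+\mu_{i,i-1}b_{i-1}^*|^2\ge\frac34|b_{i-1}^*|^2$ ($1<i\le r$); the LLL-algorithm returns a reduced basis of the lattice generated by its input basis. The ILLL-algorithm: put $k'=\left\lceil -\frac{(m+n-1)(m+n)}{4n}+\frac{m\log_2 q_{\max}}{n}\right\rceil$ and, for $k\ge1$, $c(k)=\left(2^{-\frac{m+n+3}{4}-k+1}\right)^{\frac{m+n}{m}}$. Start with the basis given by the columns of $B=\begin{pmatrix} I_n & A\\ 0& c(1)I_m\end{pmatrix}$. In iteration $k=1,\dots,k'$: apply the LLL-algorithm to the current basis; from the first vector of the reduced basis, which has the form $(q_1a_{11}+\dots+q_ma_{1m}-p_1,\dots,q_1a_{n1}+\dots+q_ma_{nm}-p_n,c(k)q_1,\dots,c(k)q_m)^T$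 with $p_i,q_j\in\mathbb Z$, output the $m$-tuple $q(k)=(q_1,\dots,q_m)$; then divide the last $m$ coordinates of all basis vectors by $2^{\frac{m+n}{m}}$. The sequence found by the algorithm is $q(1),\dots,q(k')$. *)

From mathcomp Require Import all_boot all_order all_algebra.
From mathcomp Require Import reals exp.
Set Implicit Arguments. Unset Strict Implicit. Unset Printing Implicit Defensive.
Import Order.TTheory GRing.Theory Num.Theory.
Local Open Scope ring_scope.

Section ILLL.
Variable R : realType.

Definition dotc (N : nat) (u v : 'cV[R]_N) : R := \sum_(k < N) u k 0 * v k 0.

Definition bcols (N : nat) (M : 'M[R]_N) : seq 'cV[R]_N :=
  [seq col j M | j <- enum 'I_N].

(* Gram-Schmidt: b_i^* = b_i - sum_{j<i} mu_ij b_j^*,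
   mu_ij = (b_i,b_j^* )/(b_j^*,b_j^* ) *)
Fixpoint gs_aux (N : nat) (acc s : seq 'cV[R]_N) : seq 'cV[R]_N :=
  match s with
  | [::] => acc
  | v :: s' =>
      gs_aux (rcons acc (v - \sum_(w <- acc) (dotc v w / dotc w w) *: w)) s'
  end.

Definition bvec (N : nat) (M : 'M[R]_N) (i : nat) : 'cV[R]_N := nth 0 (bcols M) i.
Definition bstar (N : nat) (M : 'M[R]_N) (i : nat) : 'cV[R]_N :=
  nth 0 (gs_aux [::] (bcols M)) i.
Definition gs_mu (N : nat) (M : 'M[R]_N) (i j : nat) : R :=
  dotc (bvec M i) (bstar M j) / dotc (bstar M j) (bstar M j).

(* reduced basis (0-indexed) *)
Definition reduced (N : nat) (M : 'M[R]_N) : Prop :=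
  (forall i j : nat, (j < i < N)%N -> `|gs_mu M i j| <= 1/2) /\
  (forall i : nat, (0 < i < N)%N ->
     let w := bstar M i + gs_mu M i i.-1 *: bstar M i.-1 in
     dotc w w >= 3/4 * dotc (bstar M i.-1) (bstar M i.-1)).

Definition in_lattice (N : nat) (M : 'M[R]_N) (v : 'cV[R]_N) : Prop :=
  exists z : 'I_N -> int, v = \sum_(j < N) (z j)%:~R *: col j M.

Definition LLL_spec (N : nat) (LLL : 'M[R]_N -> 'M[R]_N) : Prop :=
  forall M : 'M[R]_N, M \in unitmx ->
    (forall v, in_lattice (LLL M) v <-> in_lattice M v) /\ reduced (LLL M).

Definition dnint (x : R) : R :=
  Num.min (x - (Num.floor x)%:~R) ((Num.floor x + 1)%:~R - x).

Definition illl_c (n m k : nat) : R :=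
  powR (powR 2 (- ((m + n + 3)%:R / 4) - k%:R + 1)) ((m + n)%:R / m%:R).

Definition illl_kprime (n m : nat) (qmax : R) : int :=
  Num.ceil (- (((m + n - 1) * (m + n))%:R / (4 * n)%:R)
            + m%:R * (ln qmax / ln 2) / n%:R).

Definition illl_B0 (n m : nat) (A : 'M[R]_(n, m)) : 'M[R]_(n + m) :=
  block_mx 1%:M A 0 (illl_c n m 1 *: 1%:M).

Definition illl_D (n m : nat) : 'M[R]_(n + m) :=
  block_mx 1%:M 0 0 ((powR 2 ((m + n)%:R / m%:R))^-1 *: 1%:M).

(* illl_basis k = the basis at the start of iteration k+1 *)
Fixpoint illl_basis (n m : nat) (LLL : 'M[R]_(n + m) -> 'M[R]_(n + m))
  (A : 'M[R]_(n, m)) (k : nat) : 'M[R]_(n + m) :=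
  match k with
  | 0 => illl_B0 A
  | k'.+1 => illl_D n m *m LLL (illl_basis LLL A k')
  end.

(* q(k) for k >= 1: last m coordinates of the first reduced vector, divided by c(k) *)
Definition illl_q (n m : nat) (LLL : 'M[R]_(n + m) -> 'M[R]_(n + m))
  (A : 'M[R]_(n, m)) (k : nat) (j : 'I_m) : R :=
  bvec (LLL (illl_basis LLL A k.-1)) 0 (rshift n j) 0 / illl_c n m k.

End ILLL.

From mathcomp Require Import all_boot all_order all_algebra.
From mathcomp Require Import reals exp.
From mathcomp Require Import ring lra.
Set Implicit Arguments. Unset Strict Implicit. Unset Printing Implicit Defensive.
Import Order.TTheory GRing.Theory Num.Theory.
Local Open Scope ring_scope.

(* The basis of iteration k generates a lattice of determinant c(k)^m whose
   vectors are (q.a_i - p_i)_i stacked on (c(k) q_j)_j with p, q integral.  The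
   first vector b of an LLL-reduced basis of dimension N = m + n satisfies
   |b|^(2N) <= 2^(N(N-1)/2) det^2, which for this determinant is exactly
   |b| <= 2^-k; hence ||q(k).a_i|| <= 2^-k and |q(k)_j| <= 2^-k / c(k).  Given Q,
   the iteration k = floor y + 1 with y = (m/n)(log_2 Q + 1) - (m+n+3)(m+n)/(4n)
   makes both bounds those of the theorem, and k <= k' because Q <= q_max. *)

Section InnerProduct.
Variables (R : realType) (N : nat).
Implicit Types u v w : 'cV[R]_N.

Lemma dotcC u v : dotc u v = dotc v u.
Proof. by apply: eq_bigr => k _; rewrite mulrC. Qed.

Lemma dotcDl u v w : dotc (u + v) w = dotc u w + dotc v w.
Proof. by rewrite /dotc -big_split; apply: eq_bigr => k _; rewrite mxE mulrDl. Qed.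

Lemma dotcNl u w : dotc (- u) w = - dotc u w.
Proof. by rewrite /dotc -sumrN; apply: eq_bigr => k _; rewrite mxE mulNr. Qed.

Lemma dotcBl u v w : dotc (u - v) w = dotc u w - dotc v w.
Proof. by rewrite dotcDl dotcNl. Qed.

Lemma dotcZl a u w : dotc (a *: u) w = a * dotc u w.
Proof. by rewrite /dotc mulr_sumr; apply: eq_bigr => k _; rewrite mxE mulrA. Qed.

Lemma dotcDr u v w : dotc w (u + v) = dotc w u + dotc w v.
Proof. by rewrite dotcC dotcDl !(dotcC w). Qed.

Lemma dotcZr a u w : dotc w (a *: u) = a * dotc w u.
Proof. by rewrite dotcC dotcZl dotcC. Qed.

Lemma dotc0r u : dotc u 0 = 0.
Proof. by rewrite /dotc big1 // => k _; rewrite mxE mulr0. Qed.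

Lemma dotc_suml I (r : seq I) (P : pred I) (F : I -> 'cV[R]_N) w :
  dotc (\sum_(i <- r | P i) F i) w = \sum_(i <- r | P i) dotc (F i) w.
Proof.
rewrite /dotc; under eq_bigr => k _ do rewrite summxE mulr_suml.
by rewrite exchange_big.
Qed.

Lemma dotc_ge0 u : 0 <= dotc u u.
Proof. by rewrite sumr_ge0 // => k _; rewrite -expr2 sqr_ge0. Qed.

Lemma dotc_eq0 u : dotc u u = 0 -> u = 0.
Proof.
move=> /eqP; rewrite psumr_eq0 => [/allP u0|k _]; last by rewrite -expr2 sqr_ge0.
apply/matrixP => i j; rewrite (ord1 j) mxE.
by have /implyP/(_ isT) := u0 i (mem_index_enum _); rewrite mulf_eq0 orbb => /eqP.
Qed.

Lemma sqr_coord_le_dotc u i : u i 0 ^+ 2 <= dotc u u.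
Proof.
rewrite /dotc (bigD1 i) //= -expr2 lerDl sumr_ge0 // => k _.
by rewrite -expr2 sqr_ge0.
Qed.

Lemma norm_coord_le u i r : 0 <= r -> dotc u u <= r ^+ 2 -> `|u i 0| <= r.
Proof.
move=> r0 ur; rewrite -(ler_pXn2r (_ : (0 < 2)%N)) ?nnegrE ?normr_ge0 //.
by rewrite real_normK ?num_real //; apply: le_trans (sqr_coord_le_dotc _ _) ur.
Qed.

End InnerProduct.

Section GramSchmidt.
Variable R : realType.

Lemma gs_auxP N (acc s : seq 'cV[R]_N) :
  [/\ size (gs_aux acc s) = (size acc + size s)%N,
      take (size acc) (gs_aux acc s) = acc &
      forall i, (i < size s)%N -> nth 0 (gs_aux acc s) (size acc + i) =
        nth 0 s i - \sum_(w <- take (size acc + i) (gs_aux acc s))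
                     (dotc (nth 0 s i) w / dotc w w) *: w].
Proof.
elim: s acc => [|v s IH] acc /=.
  by split => //; [rewrite addn0 | rewrite take_size].
set v' := v - _.
have [size_gs take_gs nth_gs] := IH (rcons acc v').
rewrite size_rcons in size_gs take_gs nth_gs.
have take_acc : take (size acc) (gs_aux (rcons acc v') s) = acc.
  by rewrite -(take_takel _ (leqnSn (size acc))) take_gs -cats1 take_size_cat.
split => //; first by rewrite size_gs addSnnS.
case=> [|i] lt_i; last by rewrite -addSnnS nth_gs.
by rewrite addn0 -(nth_take _ (ltnSn (size acc))) take_gs nth_rcons ltnn eqxx take_acc.
Qed.

Lemma size_bcols N (M : 'M[R]_N) : size (bcols M) = N.
Proof. by rewrite size_map size_enum_ord. Qed.

Lemma bvec_col N (M : 'M[R]_N) (i : 'I_N) : bvec M i = col i M.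
Proof. by rewrite /bvec (nth_map i) ?size_enum_ord // nth_ord_enum. Qed.

Lemma bstarE N (M : 'M[R]_N) i : (i < N)%N ->
  bstar M i = bvec M i - \sum_(l < i) gs_mu M i l *: bstar M l.
Proof.
move=> lt_iN; have [size_gs _ nth_gs] := gs_auxP [::] (bcols M).
rewrite size_bcols /= in size_gs nth_gs.
rewrite /bstar (nth_gs _ lt_iN) /=; congr (_ - _).
rewrite (big_nth 0) size_takel; last by rewrite size_gs ltnW.
by rewrite big_mkord; apply: eq_bigr => l _; rewrite nth_take.
Qed.

Lemma bstar0 N (M : 'M[R]_N) : (0 < N)%N -> bstar M 0 = bvec M 0.
Proof. by move=> N_gt0; rewrite bstarE // big_ord0 subr0. Qed.

Lemma col_bstarE N (M : 'M[R]_N) (i : 'I_N) :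
  col i M = bstar M i + \sum_(l < i) gs_mu M i l *: bstar M l.
Proof. by rewrite bstarE // bvec_col subrK. Qed.

Lemma bstar_orth N (M : 'M[R]_N) i j : (i < N)%N -> (j < i)%N ->
  dotc (bstar M i) (bstar M j) = 0.
Proof.
elim/ltn_ind: i j => i IH j lt_iN lt_ji.
have orth_lj l : (l < i)%N -> l != j -> dotc (bstar M l) (bstar M j) = 0.
  move=> lt_li; case: ltngtP => // [lt_lj|lt_jl] _.
    by rewrite dotcC IH // (ltn_trans _ lt_iN).
  by rewrite IH // (ltn_trans lt_li lt_iN).
rewrite bstarE // dotcBl dotc_suml (bigD1 (Ordinal lt_ji)) //=.
rewrite [X in _ - (_ + X)]big1 => [|l ?]; last by rewrite dotcZl orth_lj ?mulr0.
rewrite addr0 dotcZl /gs_mu.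
have [bj0|bj_neq0] := eqVneq (dotc (bstar M j) (bstar M j)) 0.
  by rewrite (dotc_eq0 bj0) !dotc0r mulr0 subr0.
by rewrite mulfVK // subrr.
Qed.

(* [M] is the matrix of the [bstar M i] times a unitriangular matrix, and the
   [bstar M i] are orthogonal. *)
Lemma sqr_det_bstar N (M : 'M[R]_N) :
  \det M ^+ 2 = \prod_(i < N) dotc (bstar M i) (bstar M i).
Proof.
pose Bs : 'M[R]_N := \matrix_(r, i) bstar M i r 0.
pose U : 'M[R]_N :=
  \matrix_(j, i) (if (j < i)%N then gs_mu M i j else (j == i)%:R).
have M_BsU : M = Bs *m U.
  apply/matrixP => r i; rewrite !mxE.
  have -> : M r i = col i M r 0 by rewrite mxE.
  rewrite col_bstarE mxE summxE (bigID (fun j : 'I_N => (j < i)%N)) /= addrC.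
  congr (_ + _).
    rewrite (big_ord_widen N (fun l => (gs_mu M i l *: bstar M l) r 0)); last exact: ltnW.
    by apply: eq_bigr => j lt_ji; rewrite !mxE lt_ji mulrC.
  rewrite (bigD1 i) ?ltnn //= !mxE ltnn eqxx mulr1 big1 ?addr0 // => j /andP[ge_ji ne_ji].
  by rewrite !mxE (negbTE ge_ji) (negbTE ne_ji) mulr0.
have detU : \det U = 1.
  rewrite -det_tr det_trig; last first.
    apply/is_trig_mxP => a b lt_ab; rewrite !mxE ltnNge ltnW //=.
    by case: eqP lt_ab => // ->; rewrite ltnn.
  by rewrite big1 // => k _; rewrite !mxE ltnn eqxx.
have gramBs : Bs^T *m Bs = diag_mx (\row_i dotc (bstar M i) (bstar M i)).
  apply/matrixP => a b; rewrite !mxE.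
  rewrite (eq_bigr (fun r => bstar M a r 0 * bstar M b r 0)) => [|r _]; last by rewrite !mxE.
  case: (ltngtP a b) => [lt_ab|lt_ba|/val_inj->]; last by rewrite eqxx mulr1n.
    by rewrite -val_eqE /= (ltn_eqF lt_ab) -/(dotc (bstar M a) _) dotcC bstar_orth.
  by rewrite -val_eqE /= (gtn_eqF lt_ba) -/(dotc (bstar M a) _) bstar_orth.
rewrite {1}M_BsU det_mulmx detU mulr1.
have := congr1 determinant gramBs.
by rewrite det_mulmx det_tr det_diag -expr2 => ->; apply: eq_bigr => i _; rewrite mxE.
Qed.

End GramSchmidt.

Section ReducedBasis.
Variables (R : realType) (N : nat) (M : 'M[R]_N).
Hypothesis M_reduced : reduced M.

(* The Lovasz condition reads [|b_i^*|^2 + mu^2 |b_(i-1)^*|^2 >= 3/4 |b_(i-1)^*|^2]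
   by orthogonality, and [mu^2 <= 1/4]. *)
Lemma reduced_bstar_pred_le i : (0 < i < N)%N ->
  dotc (bstar M i.-1) (bstar M i.-1) <= 2 * dotc (bstar M i) (bstar M i).
Proof.
move=> i_bound; have /andP[i_gt0 lt_iN] := i_bound.
have lt_pi : (i.-1 < i)%N by rewrite ltn_predL.
have /= := M_reduced.2 i i_bound.
rewrite dotcDl !dotcDr !dotcZl !dotcZr (dotcC (bstar M i.-1)) (bstar_orth M lt_iN lt_pi).
rewrite !mulr0 !addr0; set mu := gs_mu M i i.-1.
set X := dotc (bstar M i.-1) _; have X_ge0 : 0 <= X := dotc_ge0 _.
have mu_le : `|mu| <= 1/2 by apply: M_reduced.1; rewrite lt_pi.
have mu2_le : mu ^+ 2 <= 1/4.
  by rewrite -real_normK ?num_real //; have := normr_ge0 mu; nra.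
have : mu * (mu * X) <= 1/4 * X by rewrite mulrA -expr2 ler_wpM2r.
lra.
Qed.

Lemma reduced_bstar0_le i : (i < N)%N ->
  dotc (bstar M 0) (bstar M 0) <= 2 ^+ i * dotc (bstar M i) (bstar M i).
Proof.
elim: i => [|i IH] lt_iN; first by rewrite expr0 mul1r.
apply: le_trans (IH (ltnW lt_iN)) _.
rewrite exprSr -mulrA ler_pM2l ?exprn_gt0 //.
exact: (reduced_bstar_pred_le (i := i.+1)).
Qed.

Lemma reduced_first_le : (0 < N)%N ->
  dotc (bvec M 0) (bvec M 0) ^+ N <= 2 ^+ 'C(N, 2) * \det M ^+ 2.
Proof.
move=> N_gt0; rewrite -bstar0 // sqr_det_bstar.
have -> : dotc (bstar M 0) (bstar M 0) ^+ N = \prod_(i < N) dotc (bstar M 0) (bstar M 0).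
  by rewrite prodr_const card_ord.
have -> : (2 : R) ^+ 'C(N, 2) = \prod_(i < N) 2 ^+ i.
  by rewrite prodrXr -bin2_sum big_mkord.
rewrite -big_split /=.
by apply: ler_prod => i _; rewrite dotc_ge0 reduced_bstar0_le.
Qed.

End ReducedBasis.

Section Lattice.
Variable R : realType.

Definition intcv N (z : 'cV[int]_N) : 'cV[R]_N := map_mx (fun x : int => x%:~R) z.

Lemma in_latticeP N (M : 'M[R]_N) v :
  in_lattice M v <-> exists z : 'cV[int]_N, v = M *m intcv z.
Proof.
split=> [[z ->]|[z ->]]; [exists (\col_j z j) | exists (fun j => z j 0)];
  by apply/matrixP => r c; rewrite (ord1 c) !mxE summxE; apply: eq_bigr => j _;
     rewrite !mxE mulrC.
Qed.

Lemma col_in_lattice N (M : 'M[R]_N) j : in_lattice M (col j M).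
Proof.
apply/in_latticeP; exists (\col_i (i == j)%:Z); apply/matrixP => r c.
rewrite (ord1 c) !mxE (bigD1 j) //= big1 ?addr0 => [|i ne_ij].
  by rewrite !mxE eqxx mulr1.
by rewrite !mxE (negbTE ne_ij) mulr0.
Qed.

Lemma det_sublattice N (L M : 'M[R]_N) :
  (forall j, in_lattice L (col j M)) -> exists d : int, \det M = \det L * d%:~R.
Proof.
move=> ML; have /fin_all_exists[z Mz] j := iffLR (in_latticeP L _) (ML j).
pose Z : 'M[int]_N := \matrix_(i, j) z j i 0.
exists (\det Z); rewrite -(det_map_mx (intr : {rmorphism int -> R})) -det_mulmx.
congr (\det _); apply/matrixP => r j.
have /(congr1 (fun v : 'cV[R]_N => v r 0)) := Mz j.
by rewrite !mxE => ->; apply: eq_bigr => k _; rewrite !mxE.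
Qed.

Section LLLOutput.
Variables (N : nat) (LLL : 'M[R]_N -> 'M[R]_N) (M : 'M[R]_N).
Hypotheses (LLL_ok : LLL_spec LLL) (M_unit : M \in unitmx).

Lemma LLL_det_mul : exists2 d : int, d != 0 & \det M = \det (LLL M) * d%:~R.
Proof.
have [d detM] : exists d : int, \det M = \det (LLL M) * d%:~R.
  by apply: det_sublattice => j; apply/(LLL_ok M_unit).1/col_in_lattice.
exists d => //; apply: contraTneq M_unit => d0.
by rewrite unitmxE unitfE detM d0 mulr0 eqxx.
Qed.

Lemma LLL_unitmx : LLL M \in unitmx.
Proof.
have [d _ detM] := LLL_det_mul; rewrite unitmxE unitfE.
by apply: contraTneq M_unit => detL0; rewrite unitmxE unitfE detM detL0 mul0r eqxx.
Qed.

Lemma LLL_det_le : `|\det (LLL M)| <= `|\det M|.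
Proof.
have [d d_neq0 ->] := LLL_det_mul; rewrite normrM ler_peMr // -intr_norm.
by rewrite ler1z -gtz0_ge1 normr_gt0.
Qed.

End LLLOutput.

End Lattice.
Arguments intcv {R N} z.

Section PowerOfTwo.
Variable R : realType.
Implicit Types x y : R.

Lemma powR2D x y : powR 2 (x + y) = powR 2 x * powR 2 y.
Proof. by rewrite powRD // pnatr_eq0 implybT. Qed.

Lemma powR2X x k : powR 2 x ^+ k = powR 2 (k%:R * x).
Proof. by rewrite -powR_mulrn ?powR_ge0 // -powRrM mulrC. Qed.

Lemma ler_powR2 x y : (powR 2 x <= powR 2 y) = (x <= y).
Proof.
have ln2_gt0 : 0 < ln (2 : R) by rewrite ln_gt0 // ltr1n.
have pos2 (z : R) : powR 2 z \in Num.pos by rewrite posrE powR_gt0.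
by rewrite -(ler_ln (pos2 x) (pos2 y)) !ln_powR ler_pM2r.
Qed.

Lemma powR2_log2 x : 0 < x -> powR 2 (ln x / ln 2) = x.
Proof.
move=> x_gt0; have ln2_gt0 : 0 < ln (2 : R) by rewrite ln_gt0 // ltr1n.
by rewrite /powR pnatr_eq0 /= divfK ?gt_eqF // lnK.
Qed.

Lemma natr_bin2 k : ('C(k, 2)%:R : R) = k%:R * (k%:R - 1) / 2.
Proof.
elim: k => [|k IH]; first by rewrite bin0n !mul0r.
by rewrite binS bin1 natrD IH -addn1 natrD; field.
Qed.

End PowerOfTwo.

Lemma dnint_le_dist (R : realType) (x : R) (z : int) : dnint x <= `|x - z%:~R|.
Proof.
rewrite /dnint ge_min intrD; set f := Num.floor x.
have /andP[f_le lt_f1] := floor_itv x; rewrite intrD in lt_f1.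
have := ler_norm (x - z%:~R); have := ler_norm (z%:~R - x); rewrite distrC.
case: (lerP z f) => [le_zf|lt_fz] ? ?; apply/orP; [left|right].
  have : (z%:~R : R) <= f%:~R by rewrite ler_int.
  lra.
have : (f%:~R + 1 : R) <= z%:~R by rewrite -[1]/(1%:~R) -intrD ler_int lezD1.
lra.
Qed.

Section ILLL.
Variables (R : realType) (n m : nat).

Definition illl_shrink : R := (powR 2 ((m + n)%:R / m%:R))^-1.

Lemma illl_shrink_gt0 : 0 < illl_shrink.
Proof. by rewrite invr_gt0 powR_gt0. Qed.

Lemma illl_cE k : illl_c R n m k =
  powR 2 ((- ((m + n + 3)%:R / 4) - k%:R + 1) * ((m + n)%:R / m%:R)).
Proof. by rewrite /illl_c -powRrM. Qed.

Lemma illl_c_gt0 k : 0 < illl_c R n m k.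
Proof. by rewrite illl_cE powR_gt0. Qed.

Lemma illl_cS k : illl_c R n m k.+1 = illl_shrink * illl_c R n m k.
Proof.
rewrite !illl_cE /illl_shrink -powRN -powR2D; congr (powR 2 _).
by rewrite -(addn1 k) natrD; ring.
Qed.

Lemma det_illl_D : \det (illl_D R n m) = illl_shrink ^+ m.
Proof. by rewrite det_ublock det1 scalemx1 det_scalar mul1r. Qed.

Lemma mul_illl_D_col p (u : 'M[R]_(n, p)) (v : 'M[R]_(m, p)) :
  illl_D R n m *m col_mx u v = col_mx u (illl_shrink *: v).
Proof. by rewrite mul_block_col mul1mx !mul0mx addr0 add0r scalemx1 mul_scalar_mx. Qed.

Variables (A : 'M[R]_(n, m)) (LLL : 'M[R]_(n + m) -> 'M[R]_(n + m)).
Hypothesis LLL_ok : LLL_spec LLL.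

Lemma det_illl_B0 : \det (illl_B0 A) = illl_c R n m 1 ^+ m.
Proof. by rewrite det_ublock det1 scalemx1 det_scalar mul1r. Qed.

Lemma illl_basis_unitmx k : illl_basis LLL A k \in unitmx.
Proof.
elim: k => [|k IH] /=; rewrite unitmxE unitfE.
  by rewrite det_illl_B0 expf_neq0 ?gt_eqF ?illl_c_gt0.
rewrite det_mulmx det_illl_D mulf_neq0 //; first by rewrite expf_neq0 ?gt_eqF ?illl_shrink_gt0.
by rewrite -unitfE -unitmxE LLL_unitmx.
Qed.

Lemma illl_basis_det_le k : `|\det (illl_basis LLL A k)| <= illl_c R n m k.+1 ^+ m.
Proof.
elim: k => [|k IH] /=.
  by rewrite det_illl_B0 ger0_norm // exprn_ge0 // ltW // illl_c_gt0.
have shrinkm_ge0 : 0 <= illl_shrink ^+ m by rewrite exprn_ge0 // ltW // illl_shrink_gt0.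
rewrite det_mulmx det_illl_D normrM illl_cS exprMn ger0_norm // ler_wpM2l //.
exact: le_trans (LLL_det_le LLL_ok (illl_basis_unitmx k)) IH.
Qed.

Lemma illl_basis_lattice k v : in_lattice (illl_basis LLL A k) v ->
  exists zp zq, v = col_mx (intcv zp + A *m intcv zq) (illl_c R n m k.+1 *: intcv zq).
Proof.
elim: k v => [|k IH] v /in_latticeP[z ->] /=.
  exists (usubmx z), (dsubmx z); rewrite -{1}(vsubmxK z) /intcv map_col_mx.
  by rewrite mul_block_col mul1mx mul0mx add0r scalemx1 mul_scalar_mx.
rewrite -mulmxA.
have /IH[zp [zq ->]] : in_lattice (illl_basis LLL A k) (LLL (illl_basis LLL A k) *m intcv z).
  by apply/(LLL_ok (illl_basis_unitmx k)).1/in_latticeP; exists z.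
by exists zp, zq; rewrite mul_illl_D_col scalerA -illl_cS.
Qed.

End ILLL.

Section FirstVector.
Variables (R : realType) (n m : nat) (A : 'M[R]_(n, m)).
Variable LLL : 'M[R]_(n + m) -> 'M[R]_(n + m).
Hypotheses (LLL_ok : LLL_spec LLL) (m_gt0 : (0 < m)%N).

Let N_gt0 : (0 < n + m)%N. Proof. by rewrite addn_gt0 m_gt0 orbT. Qed.

(* The exponent of [c(k)] is tuned so that the LLL bound on the first vector
   of the k-th basis is exactly [2^(-k)]. *)
Lemma illl_det_exponent k :
  2 ^+ 'C(n + m, 2) * (illl_c R n m k.+1 ^+ m) ^+ 2
  = (powR 2 (- k.+1%:R) ^+ 2) ^+ (n + m).
Proof.
have m_neq0 : (m%:R : R) != 0 by rewrite pnatr_eq0 -lt0n.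
have -> : (2 : R) ^+ 'C(n + m, 2) = powR 2 'C(n + m, 2)%:R by rewrite powR_mulrn.
rewrite illl_cE -!exprM !powR2X -powR2D; congr (powR 2 _).
by rewrite natr_bin2 -(addn1 k) !natrM !natrD; field.
Qed.

Lemma illl_first_dotc_le k :
  dotc (bvec (LLL (illl_basis LLL A k)) 0) (bvec (LLL (illl_basis LLL A k)) 0)
    <= powR 2 (- k.+1%:R) ^+ 2.
Proof.
have B_unit := illl_basis_unitmx A LLL_ok k.
have c_ge0 : 0 <= illl_c R n m k.+1 ^+ m by rewrite exprn_ge0 // ltW // illl_c_gt0.
have detL : \det (LLL (illl_basis LLL A k)) ^+ 2 <= (illl_c R n m k.+1 ^+ m) ^+ 2.
  rewrite -real_normK ?num_real // ler_pXn2r ?nnegrE ?normr_ge0 //.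
  exact: le_trans (LLL_det_le LLL_ok B_unit) (illl_basis_det_le A LLL_ok k).
have : dotc (bvec (LLL (illl_basis LLL A k)) 0) (bvec (LLL (illl_basis LLL A k)) 0) ^+ (n + m)
    <= (powR 2 (- k.+1%:R) ^+ 2) ^+ (n + m).
  rewrite -illl_det_exponent; apply: le_trans (reduced_first_le (LLL_ok B_unit).2 N_gt0) _.
  by rewrite ler_wpM2l ?exprn_ge0.
by rewrite ler_pXn2r ?nnegrE ?dotc_ge0 ?exprn_ge0 ?powR_ge0.
Qed.

Lemma illl_first_vecP k : exists (zp : 'cV[int]_n) (zq : 'cV[int]_m),
  bvec (LLL (illl_basis LLL A k)) 0
    = col_mx (intcv zp + A *m intcv zq) (illl_c R n m k.+1 *: intcv zq).
Proof.
apply: (illl_basis_lattice LLL_ok); apply/(LLL_ok (illl_basis_unitmx A LLL_ok k)).1.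
have -> : bvec (LLL (illl_basis LLL A k)) 0 = col (Ordinal N_gt0) (LLL (illl_basis LLL A k)).
  by rewrite -bvec_col.
exact: col_in_lattice.
Qed.

Lemma illl_qP k : exists q : 'I_m -> int,
  [/\ forall j, illl_q LLL A k.+1 j = (q j)%:~R,
      forall j, illl_c R n m k.+1 * `|(q j)%:~R| <= powR 2 (- k.+1%:R) &
      forall i, dnint (\sum_(j < m) (q j)%:~R * A i j) <= powR 2 (- k.+1%:R)].
Proof.
have [zp [zq bE]] := illl_first_vecP k.
have coord_le i : `|bvec (LLL (illl_basis LLL A k)) 0 i 0| <= powR 2 (- k.+1%:R).
  exact: norm_coord_le (powR_ge0 _ _) (illl_first_dotc_le k).
have c_gt0 := illl_c_gt0 R n m k.+1.
exists (fun j => zq j 0); split=> [j|j|i].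
- by rewrite /illl_q /= bE col_mxEd !mxE mulrC mulKf ?gt_eqF.
- by have := coord_le (rshift n j); rewrite bE col_mxEd !mxE normrM gtr0_norm.
apply: le_trans (dnint_le_dist _ (- zp i 0)) _.
have -> : \sum_(j < m) (zq j 0)%:~R * A i j - (- zp i 0)%:~R
    = (intcv zp + A *m intcv zq) i 0.
  rewrite !mxE intrN opprK addrC; congr (_ + _).
  by apply: eq_bigr => j _; rewrite !mxE mulrC.
by have := coord_le (lshift m i); rewrite bE col_mxEu.
Qed.

End FirstVector.

Section IterationChoice.
Variables (R : realType) (n m : nat).
Hypotheses (m_gt0 : (0 < m)%N) (n_gt0 : (0 < n)%N).

(* [t] and [L] stand for [log_2 Q] and [log_2 q_max]. *)
Lemma illl_iteration_exponent (t L : R) :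
  ((m + n + 3) * (m + n))%:R / (4 * m)%:R <= t -> t <= L ->
  exists k : nat,
    [/\ k.+1%:R <= - (((m + n - 1) * (m + n))%:R / (4 * n)%:R) + m%:R * L / n%:R,
        - k.+1%:R <= (- ((m + n + 3)%:R / 4) - k.+1%:R + 1) * ((m + n)%:R / m%:R) + t &
        - k.+1%:R <= ((m + n + 3) * (m + n))%:R / (4 * n)%:R + t * - (m%:R / n%:R)].
Proof.
move=> t_ge t_le.
have m_neq0 : (m%:R : R) != 0 by rewrite pnatr_eq0 -lt0n.
have n_neq0 : (n%:R : R) != 0 by rewrite pnatr_eq0 -lt0n.
have mn_ge0 : 0 <= (m%:R / n%:R : R) by rewrite divr_ge0.
have nm_ge0 : 0 <= (n%:R / m%:R : R) by rewrite divr_ge0.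
set y := m%:R / n%:R * (t + 1) - ((m + n + 3) * (m + n))%:R / (4 * n)%:R.
have y_ge : m%:R / n%:R <= y.
  have -> : y = m%:R / n%:R * (t - ((m + n + 3) * (m + n))%:R / (4 * m)%:R)
                + m%:R / n%:R by rewrite /y !natrM !natrD; field; rewrite ?m_neq0 ?n_neq0.
  by rewrite lerDr mulr_ge0 // subr_ge0.
have /andP[k_le lt_yk] := truncn_itv (le_trans mn_ge0 y_ge).
exists (Num.truncn y); set k := Num.truncn y in k_le lt_yk *; split.
- have -> : - (((m + n - 1) * (m + n))%:R / (4 * n)%:R) + m%:R * L / n%:R
            = y + 1 + m%:R / n%:R * (L - t).
    by rewrite /y !natrM natrB ?addn_gt0 ?m_gt0 // !natrD; field; rewrite ?m_neq0 ?n_neq0.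
  have : 0 <= m%:R / n%:R * (L - t) by rewrite mulr_ge0 // subr_ge0.
  rewrite -natr1; lra.
- have -> : (- ((m + n + 3)%:R / 4) - k.+1%:R + 1) * ((m + n)%:R / m%:R) + t
            = - k.+1%:R + n%:R / m%:R * (y - k%:R).
    by rewrite /y !natrM !natrD -(addn1 k) natrD; field; rewrite ?m_neq0 ?n_neq0.
  have : 0 <= n%:R / m%:R * (y - k%:R) by rewrite mulr_ge0 // subr_ge0.
  lra.
- have -> : ((m + n + 3) * (m + n))%:R / (4 * n)%:R + t * - (m%:R / n%:R)
            = - k.+1%:R + (k.+1%:R - y) + m%:R / n%:R.
    by rewrite /y !natrM !natrD -(addn1 k) natrD; field; rewrite ?m_neq0 ?n_neq0.
  lra.
Qed.

Lemma illl_iteration (qmax Q : R) :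
  powR 2 (((m + n + 3) * (m + n))%:R / (4 * m)%:R) <= Q -> Q <= qmax ->
  exists k : nat,
    [/\ (k.+1%:Z <= illl_kprime n m qmax)%R,
        powR 2 (- k.+1%:R) <= illl_c R n m k.+1 * Q &
        powR 2 (- k.+1%:R)
          <= powR 2 (((m + n + 3) * (m + n))%:R / (4 * n)%:R) * powR Q (- (m%:R / n%:R))].
Proof.
move=> Q_ge Q_le; have Q_gt0 : 0 < Q by apply: lt_le_trans Q_ge; rewrite powR_gt0.
have QE := powR2_log2 Q_gt0.
have t_ge : ((m + n + 3) * (m + n))%:R / (4 * m)%:R <= ln Q / ln 2.
  by rewrite -ler_powR2 QE.
have t_le : ln Q / ln 2 <= ln qmax / ln 2.
  by rewrite -ler_powR2 QE powR2_log2 // (lt_le_trans Q_gt0 Q_le).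
have [k [k_le cQ_ge mn_ge]] := illl_iteration_exponent t_ge t_le.
exists k; split.
- by rewrite /illl_kprime -(ler_int R) -pmulrn (le_trans k_le) ?ceil_ge.
- by rewrite illl_cE -QE -powR2D ler_powR2.
- by rewrite -QE -powRrM -powR2D ler_powR2.
Qed.

End IterationChoice.

Theorem theorem2 (R : realType) (m n : nat) (A : 'M[R]_(n, m)) (qmax : R)
  (LLL : 'M[R]_(n + m) -> 'M[R]_(n + m)) :
  (1 <= m)%N -> (1 <= n)%N -> 1 < qmax -> LLL_spec LLL ->
  (forall k : nat, (1 <= k)%N -> (k%:Z <= illl_kprime n m qmax)%R ->
     forall j : 'I_m, exists z : int, illl_q LLL A k j = z%:~R) /\
  (forall Q : R,
     powR 2 (((m + n + 3) * (m + n))%:R / (4 * m)%:R) <= Q -> Q <= qmax ->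
     exists k : nat, [/\ (1 <= k)%N, (k%:Z <= illl_kprime n m qmax)%R &
       exists q : 'I_m -> int,
         [/\ forall j, illl_q LLL A k j = (q j)%:~R,
             forall j, `|(q j)%:~R : R| <= Q &
             forall i : 'I_n,
               dnint (\sum_(j < m) (q j)%:~R * A i j)
                 <= powR 2 (((m + n + 3) * (m + n))%:R / (4 * n)%:R)
                    * powR Q (- (m%:R / n%:R))]]).
Proof.
move=> m_gt0 n_gt0 _ LLL_ok; split.
  move=> [//|k] _ _ j; have [q [qE _ _]] := illl_qP A LLL_ok m_gt0 k.
  by exists (q j).
move=> Q Q_ge Q_le.
have [k [k_le cQ_ge Q_ge']] := illl_iteration m_gt0 n_gt0 Q_ge Q_le.
have [q [qE q_le dnint_le]] := illl_qP A LLL_ok m_gt0 k.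
exists k.+1; split => //; exists q; split => // [j|i].
- by rewrite -(ler_pM2l (illl_c_gt0 R n m k.+1)) (le_trans (q_le j)).
- exact: le_trans (dnint_le i) Q_ge'.
Qed.
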